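(* Let $R$ and $S$ be commutative rings with identity, $f:R\to S$ a ring homomorphism, and $J$ a nonzero proper ideal of $S$. If $R\bowtie^f J$ is compactly packed, then $R$ is compactly packed and the set $\operatorname{Spec}(S)\setminus V(J)$ is compactly packed.
   Context: $R\bowtie^f J:=\{(r,f(r)+j)\mid r\in R,\ j\in J\}$, a subring of $R\times S$. For a commutative ring $A$, $V(I)$ is the set of prime ideals of $A$ containing the ideal $I$. A subset $X\subseteq\operatorname{Spec}(A)$ is compactly packed if whenever an ideal $I$ of $A$ is contained in the union of a family $\{\mathfrak{p}_i\}_i$ of elements of $X$, then $I\subseteq\mathfrak{p}_i$ for some $i$; the ring $A$ is compactly packed if $\operatorname{Spec}(A)$ is compactly packed. *)

From HB Require Import structures.
From mathcomp Require Import all_boot all_algebra.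
From mathcomp Require Import boolp.

Set Implicit Arguments.
Unset Strict Implicit.
Unset Printing Implicit Defensive.

Import GRing.Theory.
Local Open Scope ring_scope.

Definition is_ideal (A : comPzRingType) (I : A -> Prop) : Prop :=
  [/\ I 0,
      (forall x y, I x -> I y -> I (x - y)) &
      (forall a x, I x -> I (a * x))].

Definition is_prime_ideal (A : comPzRingType) (P : A -> Prop) : Prop :=
  [/\ is_ideal P, ~ P 1 &
      (forall a b, P (a * b) -> P a \/ P b)].

Definition Spec (A : comPzRingType) : (A -> Prop) -> Prop :=
  fun P => is_prime_ideal P.

Definition Vset (A : comPzRingType) (I : A -> Prop) : (A -> Prop) -> Prop :=
  fun P => is_prime_ideal P /\ (forall x, I x -> P x).

Definition compactly_packed_set (A : comPzRingType) (X : (A -> Prop) -> Prop) : Prop :=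
  forall I : A -> Prop, is_ideal I ->
  forall (Idx : Type) (p : Idx -> A -> Prop),
    (forall i, X (p i)) ->
    (forall x, I x -> exists i, p i x) ->
    exists i, forall x, I x -> p i x.

Definition compactly_packed (A : comPzRingType) : Prop :=
  compactly_packed_set (@Spec A).

Definition amalg_pred (R S : comPzRingType) (f : {rmorphism R -> S})
  (J : S -> Prop) : pred (R * S)%type :=
  fun x => `[< exists r j, J j /\ x = (r, f r + j) >].

Section Amalgamation.
Variables (R S : comPzRingType) (f : {rmorphism R -> S}) (J : S -> Prop).
Hypothesis hJ : is_ideal J.

Lemma amalg_subring_closed : subring_closed (amalg_pred f J).
Proof.
case: hJ => J0 JB JM.
split.
- apply/asboolP; exists 1, 0; split => //; by rewrite rmorph1 addr0.
- move=> x y /asboolP [r [j [Jj ->]]] /asboolP [r' [j' [Jj' ->]]].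
  apply/asboolP; exists (r - r'), (j - j'); split; first exact: JB.
  rewrite rmorphB; congr (_, _) => /=; by rewrite opprD addrACA.
- move=> x y /asboolP [r [j [Jj ->]]] /asboolP [r' [j' [Jj' ->]]].
  apply/asboolP; exists (r * r'), (f r * j' + j * f r' + j * j'); split.
  + have Jneg : forall z, J z -> J (- z).
      by move=> z Jz; rewrite -sub0r; apply: JB.
    have JD : forall u v, J u -> J v -> J (u + v).
      by move=> u v Ju Jv; rewrite -[v]opprK; apply: JB => //; apply: Jneg.
    apply: (JD); [apply: (JD)|]; [apply: (JM) | rewrite mulrC; apply: (JM) | apply: (JM)] => //.
  + rewrite rmorphM; congr (_, _).
    by rewrite mulrDl !mulrDr !addrA [j * f r']mulrC.
Qed.

Definition amalg_carrier of is_ideal J := {x : (R * S)%type | amalg_pred f J x}.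

HB.instance Definition _ := [isSub for (@sval _ (fun x => amalg_pred f J x))
  : amalg_carrier hJ -> _].
HB.instance Definition _ := [Choice of amalg_carrier hJ by <:].
HB.instance Definition _ :=
  GRing.SubChoice_isSubComPzRing.Build _ _ (amalg_carrier hJ) amalg_subring_closed.

End Amalgamation.

Definition amalgamation (R S : comPzRingType) (f : {rmorphism R -> S})
  (J : S -> Prop) (hJ : is_ideal J) : comPzRingType :=
  @amalg_carrier R S f J hJ.

From HB Require Import structures.
From mathcomp Require Import all_boot all_algebra.
From mathcomp Require Import boolp.

Set Implicit Arguments.
Unset Strict Implicit.
Unset Printing Implicit Defensive.

(* Both rings are reached from R ⋈^f J by a projection g (first or second
   coordinate), and contracting an ideal cover along g gives a cover in
   R ⋈^f J, which compact packing collapses to a single prime.  To bring the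
   containment g^-1(I) ⊆ g^-1(P) back to I ⊆ P it suffices that c * B lies in
   the image of g for some c outside the prime P: then c * x ∈ P for x ∈ I,
   hence x ∈ P.  For the first projection (surjective) take c = 1; for the
   second one, whose image contains J, take any c ∈ J \ P, which exists
   exactly when P ∉ V(J). *)

Local Open Scope ring_scope.
Import GRing.Theory.

Section Comap.
Variables (A B : comPzRingType) (g : {rmorphism A -> B}).

Lemma ideal_comap (I : B -> Prop) : is_ideal I -> is_ideal (fun a => I (g a)).
Proof.
case=> I0 IB IM; split; first by rewrite rmorph0.
- by move=> x y Ix Iy; rewrite rmorphB; apply: IB.
- by move=> a x Ix; rewrite rmorphM; apply: IM.
Qed.

Lemma prime_ideal_comap (P : B -> Prop) :
  is_prime_ideal P -> is_prime_ideal (fun a => P (g a)).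
Proof.
case=> Pideal P1 PM; split; first exact: ideal_comap.
- by rewrite rmorph1.
- by move=> a b; rewrite rmorphM; apply: PM.
Qed.

Lemma sub_prime_of_comap (I P : B -> Prop) (c : B) :
  is_ideal I -> is_prime_ideal P -> ~ P c ->
  (forall b, exists a, g a = c * b) ->
  (forall a, I (g a) -> P (g a)) -> forall b, I b -> P b.
Proof.
move=> [_ _ IM] [_ _ PM] Pc cB_im IP b Ib.
have [a gac] := cB_im b.
have /PM [//|//] : P (c * b) by rewrite -gac; apply: IP; rewrite gac; apply: IM.
Qed.

Lemma compactly_packed_set_comap (X : (B -> Prop) -> Prop) :
  compactly_packed A ->
  (forall P, X P ->
     is_prime_ideal P /\ exists2 c, ~ P c & forall b, exists a, g a = c * b) ->
  compactly_packed_set X.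
Proof.
move=> cpA Xgood I Iideal Idx p Xp Icover.
have [i Ipi] : exists i, forall a, I (g a) -> p i (g a).
  apply: (cpA _ (ideal_comap Iideal) Idx (fun i a => p i (g a))) => [i|a /Icover//].
  by apply: prime_ideal_comap; case: (Xgood _ (Xp i)).
exists i; have [Pprime [c Pc cB_im]] := Xgood _ (Xp i).
exact: sub_prime_of_comap Pc cB_im Ipi.
Qed.

End Comap.

Lemma not_Vset_witness (S : comPzRingType) (J P : S -> Prop) :
  Spec P -> ~ Vset J P -> exists2 j, J j & ~ P j.
Proof.
move=> Pprime notV; apply: contrapT => noj; apply: notV; split=> // x Jx.
by apply: contrapT => Px; apply: noj; exists x.
Qed.

Section AmalgamationProjections.
Variables (R S : comPzRingType) (f : {rmorphism R -> S}) (J : S -> Prop)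
  (hJ : is_ideal J).

Lemma amalg_mem (r : R) (j : S) : J j -> amalg_pred f J (r, f r + j).
Proof. by move=> Jj; apply/asboolP; exists r, j. Qed.

Lemma amalg_fst_surj (r : R) :
  exists a : amalgamation f hJ, (val a).1 = r.
Proof.
have [J0 _ _] := hJ.
by exists (Sub (r, f r + 0) (amalg_mem r J0)).
Qed.

Lemma amalg_snd_mulr (j : S) : J j ->
  forall s, exists a : amalgamation f hJ, (val a).2 = j * s.
Proof.
have [_ _ JM] := hJ; move=> Jj s.
have Jjs : J (j * s) by rewrite mulrC; apply: JM.
by exists (Sub (0, f 0 + j * s) (amalg_mem 0 Jjs)); rewrite /= rmorph0 add0r.
Qed.

End AmalgamationProjections.

Theorem theorem4p2 (R S : comPzRingType) (f : {rmorphism R -> S})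
  (J : S -> Prop) (hJ : is_ideal J)
  (hJnz : exists j, J j /\ j <> 0) (hJp : ~ J 1) :
  compactly_packed (amalgamation f hJ) ->
  compactly_packed R /\
  compactly_packed_set (fun P : S -> Prop => Spec P /\ ~ Vset J P).
Proof.
move=> cpA; split.
- apply: (compactly_packed_set_comap (g := fst \o val)) cpA _ => P Pprime.
  split=> //; exists 1; first by case: Pprime.
  by move=> r; rewrite mul1r; apply: amalg_fst_surj.
- apply: (compactly_packed_set_comap (g := snd \o val)) cpA _ => P [Pprime notV].
  split=> //; have [j Jj Pj] := not_Vset_witness Pprime notV.
  by exists j => //; apply: amalg_snd_mulr.
Qed.
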